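(* Let $l\ge3$ be odd and consider the edge reinforced random walk on $\mathcal G_l$ with weight function $W:\mathbb N\to(0,\infty)$, arbitrary initial edge weights $X_0^e\in\mathbb N$ and arbitrary starting vertex. If $\beta=(\beta_0,\ldots,\beta_{l-1})\in\mathbb R^l$ is a deterministic vector such that $\big(\sum_{i=0}^{l-1}\beta_iW^*(X_n^{e_i})\big)_{n\ge0}$ is an $(\mathcal F_n)$-martingale, then $\beta=0$.
   Context: $\mathbb N=\{0,1,2,\ldots\}$. For $l\ge 3$, the cycle $\mathcal G_l$ has vertices $\{0,\ldots,l-1\}$ and edges $e_i=\{i,i+1\}$, addition modulo $l$. ERRW on $\mathcal G_l$: given $W:\mathbb N\to(0,\infty)$, initial edge weights $X_0^e\in\mathbb N$ and $I_0=v_0$, with natural filtration $(\mathcal F_n)$, $\mathbb P(I_{n+1}=v'\mid\mathcal F_n)1_{\{I_n=v\}}=\frac{W(X_n^{\{v,v'\}})}{\sum_{w\sim v}W(X_n^{\{v,w\}})}1_{\{I_n=v\sim v'\}}$, where $X_n^e=X_0^e+\sum_{k=0}^{n-1}1_{\{\{I_k,I_{k+1}\}=e\}}$. Define $W^*(n):=\sum_{k=0}^{n-1}\frac1{W(k)}$ for $n\in\mathbb N$, with $W^*(0)=0$. *)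

(* edge-reinforced random walk on the cycle G_l, with the
   martingale property expressed on the (countable, discrete) path space. *)
From Stdlib Require Import Reals List Arith Lia.
Import ListNotations.
Open Scope R_scope.

Definition vsucc (l v : nat) : nat := ((v + 1) mod l)%nat.
Definition vpred (l v : nat) : nat := ((v + l - 1) mod l)%nat.

(* does the step a -> b traverse edge e_i = {i, i+1 mod l} ? *)
Definition is_edge (l i a b : nat) : bool :=
  ((Nat.eqb a i) && Nat.eqb b (vsucc l i)) || ((Nat.eqb b i) && Nat.eqb a (vsucc l i)).

Fixpoint crossings (l i : nat) (p : list nat) : nat :=
  match p with
  | a :: ((b :: _) as t) => ((if is_edge l i a b then 1 else 0) + crossings l i t)%nat
  | _ => 0%nat
  end.

(* X_n^{e_i} for the history p = [I_0; ...; I_n] *)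
Definition Xw (l : nat) (X0 : nat -> nat) (p : list nat) (i : nat) : nat :=
  (X0 i + crossings l i p)%nat.

(* P(I_{n+1} = v' | history p) *)
Definition trans (l : nat) (W : nat -> R) (X0 : nat -> nat) (p : list nat) (v' : nat) : R :=
  let v := last p 0%nat in
  let wu := W (Xw l X0 p v) in             (* edge {v, v+1} = e_v *)
  let wd := W (Xw l X0 p (vpred l v)) in   (* edge {v-1, v} = e_(v-1) *)
  if Nat.eqb v' (vsucc l v) then wu / (wu + wd)
  else if Nat.eqb v' (vpred l v) then wd / (wu + wd)
  else 0.

Fixpoint pp_aux (l : nat) (W : nat -> R) (X0 : nat -> nat) (hist rest : list nat) : R :=
  match rest with
  | [] => 1
  | v :: r => trans l W X0 hist v * pp_aux l W X0 (hist ++ [v]) r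
  end.

(* P(I_0 = p_0, ..., I_n = p_n) when I_0 = v0 *)
Definition path_prob (l : nat) (W : nat -> R) (X0 : nat -> nat) (v0 : nat) (p : list nat) : R :=
  match p with
  | [] => 0
  | u :: r => if Nat.eqb u v0 then pp_aux l W X0 [u] r else 0
  end.

Fixpoint Wstar (W : nat -> R) (n : nat) : R :=
  match n with
  | O => 0
  | S k => Wstar W k + / W k
  end.

Definition Rsum_seq (l : nat) (f : nat -> R) : R := fold_right Rplus 0 (map f (seq 0 l)).

Definition Mproc (l : nat) (W : nat -> R) (X0 : nat -> nat) (beta : nat -> R) (p : list nat) : R :=
  Rsum_seq l (fun i => beta i * Wstar W (Xw l X0 p i)).

(* (M_n) is an (F_n)-martingale for the natural filtration of I: on every atom
   {I_0..I_n = p} of positive probability, E[M_{n+1} | F_n] = M_n.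
   (Integrability is automatic: each M_n takes finitely many values.) *)
Definition is_martingale (l : nat) (W : nat -> R) (X0 : nat -> nat) (v0 : nat) (beta : nat -> R) : Prop :=
  forall p : list nat, path_prob l W X0 v0 p > 0 ->
    Rsum_seq l (fun v' => trans l W X0 p v' * Mproc l W X0 beta (p ++ [v'])) = Mproc l W X0 beta p.

(* After a step of the walk from a vertex v, exactly one of the two
   edges at v gains one crossing: e_v if the walk moves to v+1, e_(v-1) if it
   moves to v-1.  Since W^*(x+1) - W^*(x) = 1/W(x), the conditional expected
   increment of M_n = sum_i beta_i W^*(X_n^{e_i}) at a history ending in v is
     (w_+ * beta_v / w_+ + w_- * beta_(v-1) / w_-) / (w_+ + w_-)
       = (beta_v + beta_(v-1)) / (w_+ + w_-),
   so the martingale property at such a history forces beta_v + beta_(v-1) = 0.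
   Every vertex is the endpoint of a history of positive probability (walk
   clockwise), hence beta_v = -beta_(v-1) around the whole cycle, i.e.
   beta_k = (-1)^k beta_0; closing the cycle of odd length gives 2 beta_0 = 0. *)
From Stdlib Require Import Reals List Arith Lia Lra.
Import ListNotations.
Open Scope R_scope.

Lemma vsucc_spec l v : (v < l)%nat ->
  (vsucc l v = v + 1 /\ v + 1 < l)%nat \/ (vsucc l v = 0 /\ v + 1 = l)%nat.
Proof.
  intros Hv; unfold vsucc.
  destruct (Nat.eq_dec (v + 1) l) as [E|E].
  - right. rewrite E, Nat.Div0.mod_same. lia.
  - left. rewrite Nat.mod_small; lia.
Qed.

Lemma vpred_spec l v : (v < l)%nat ->
  (vpred l v = v - 1 /\ 1 <= v)%nat \/ (vpred l v = l - 1 /\ v = 0)%nat.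
Proof.
  intros Hv; unfold vpred.
  destruct v as [|v].
  - right. rewrite Nat.mod_small; lia.
  - left. replace (S v + l - 1)%nat with (v + 1 * l)%nat by lia.
    rewrite Nat.Div0.mod_add, Nat.mod_small; lia.
Qed.

Lemma step_succ_crosses l i v : (3 <= l)%nat -> (i < l)%nat -> (v < l)%nat ->
  is_edge l i v (vsucc l v) = Nat.eqb i v.
Proof.
  intros H3 Hi Hv; unfold is_edge.
  destruct (vsucc_spec l v Hv) as [[E1 E2]|[E1 E2]];
  destruct (vsucc_spec l i Hi) as [[F1 F2]|[F1 F2]]; rewrite E1, F1;
  repeat match goal with |- context [Nat.eqb ?a ?b] =>
    destruct (Nat.eqb_spec a b) end; simpl; auto; lia.
Qed.

Lemma step_pred_crosses l i v : (3 <= l)%nat -> (i < l)%nat -> (v < l)%nat ->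
  is_edge l i v (vpred l v) = Nat.eqb i (vpred l v).
Proof.
  intros H3 Hi Hv; unfold is_edge.
  destruct (vpred_spec l v Hv) as [[E1 E2]|[E1 E2]];
  destruct (vsucc_spec l i Hi) as [[F1 F2]|[F1 F2]]; rewrite E1, F1;
  repeat match goal with |- context [Nat.eqb ?a ?b] =>
    destruct (Nat.eqb_spec a b) end; simpl; auto; lia.
Qed.

Lemma crossings_snoc l i a p b :
  crossings l i ((a :: p) ++ [b]) =
  (crossings l i (a :: p) + (if is_edge l i (last (a :: p) 0%nat) b then 1 else 0))%nat.
Proof.
  revert a; induction p as [|c p IH]; intros a.
  - simpl. lia.
  - change ((a :: c :: p) ++ [b]) with (a :: ((c :: p) ++ [b])).
    change (last (a :: c :: p) 0%nat) with (last (c :: p) 0%nat).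
    change (crossings l i (a :: (c :: p) ++ [b])) with
      ((if is_edge l i a c then 1 else 0) + crossings l i ((c :: p) ++ [b]))%nat.
    change (crossings l i (a :: c :: p)) with
      ((if is_edge l i a c then 1 else 0) + crossings l i (c :: p))%nat.
    rewrite (IH c). lia.
Qed.

Lemma sum_seq_ext f g s n : (forall i, (s <= i < s + n)%nat -> f i = g i) ->
  fold_right Rplus 0 (map f (seq s n)) = fold_right Rplus 0 (map g (seq s n)).
Proof.
  revert s; induction n as [|n IH]; intros s H; simpl; auto.
  rewrite (H s) by lia. rewrite (IH (S s)); auto. intros; apply H; lia.
Qed.

Lemma sum_seq_plus f g s n :
  fold_right Rplus 0 (map (fun i => f i + g i) (seq s n)) =
  fold_right Rplus 0 (map f (seq s n)) + fold_right Rplus 0 (map g (seq s n)).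
Proof.
  revert s; induction n as [|n IH]; intros s; simpl; [lra|]. rewrite IH. lra.
Qed.

Lemma sum_seq_indicator a c s n : (s <= a < s + n)%nat ->
  fold_right Rplus 0 (map (fun i => if Nat.eqb i a then c else 0) (seq s n)) = c.
Proof.
  revert s; induction n as [|n IH]; intros s Ha; [lia|]. simpl.
  destruct (Nat.eqb_spec s a) as [E|E].
  - subst s. rewrite (sum_seq_ext _ (fun _ => 0)).
    + clear. generalize (S a). induction n as [|n IH]; intros s; simpl; [lra|].
      specialize (IH (S s)). lra.
    + intros i Hi. destruct (Nat.eqb_spec i a); [lia | reflexivity].
  - rewrite IH by lia. lra.
Qed.

Lemma Rsum_ext l f g : (forall i, (i < l)%nat -> f i = g i) -> Rsum_seq l f = Rsum_seq l g.
Proof. intros H; apply sum_seq_ext; intros; apply H; lia. Qed.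

Lemma Rsum_plus l f g : Rsum_seq l (fun i => f i + g i) = Rsum_seq l f + Rsum_seq l g.
Proof. apply sum_seq_plus. Qed.

Lemma Rsum_indicator l a c : (a < l)%nat ->
  Rsum_seq l (fun i => if Nat.eqb i a then c else 0) = c.
Proof. intros Ha; apply sum_seq_indicator; lia. Qed.

(* If the step from the last vertex of a history to b crosses exactly the edge
   e_e, then M increases by beta_e / W(X^{e_e}), because
   W^*(x+1) = W^*(x) + 1/W(x). *)
Lemma Mproc_snoc l W X0 beta a q b e : (e < l)%nat ->
  (forall i, (i < l)%nat -> is_edge l i (last (a :: q) 0%nat) b = Nat.eqb i e) ->
  Mproc l W X0 beta ((a :: q) ++ [b])
  = Mproc l W X0 beta (a :: q) + beta e * / W (Xw l X0 (a :: q) e).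
Proof.
  intros He Hcross. unfold Mproc.
  rewrite <- (Rsum_indicator l e (beta e * / W (Xw l X0 (a :: q) e)) He).
  rewrite <- Rsum_plus. apply Rsum_ext. intros i Hi.
  unfold Xw. rewrite crossings_snoc, Hcross by exact Hi.
  destruct (Nat.eqb_spec i e) as [->|_].
  - set (x := (X0 e + crossings l e (a :: q))%nat).
    rewrite Nat.add_assoc, Nat.add_1_r. fold x. simpl Wstar. ring.
  - rewrite Nat.add_0_r. ring.
Qed.

Lemma expected_increment l W X0 beta a q v :
  (3 <= l)%nat -> (forall k, 0 < W k) -> (v < l)%nat -> last (a :: q) 0%nat = v ->
  let wu := W (Xw l X0 (a :: q) v) in
  let wd := W (Xw l X0 (a :: q) (vpred l v)) in
  Rsum_seq l (fun v' => trans l W X0 (a :: q) v' * Mproc l W X0 beta ((a :: q) ++ [v']))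
  = Mproc l W X0 beta (a :: q) + (beta v + beta (vpred l v)) / (wu + wd).
Proof.
  intros H3 HW Hv Hlast wu wd.
  set (p := a :: q) in *. set (s := vsucc l v). set (d := vpred l v) in *.
  assert (Hs : (s < l)%nat) by (destruct (vsucc_spec l v Hv); unfold s; lia).
  assert (Hd : (d < l)%nat) by (destruct (vpred_spec l v Hv); unfold d; lia).
  assert (Hsd : s <> d)
    by (destruct (vsucc_spec l v Hv); destruct (vpred_spec l v Hv); unfold s, d; lia).
  assert (Ms : Mproc l W X0 beta (p ++ [s]) = Mproc l W X0 beta p + beta v * / wu).
  { apply Mproc_snoc; auto. intros i Hi. fold p. rewrite Hlast. apply step_succ_crosses; auto. }
  assert (Md : Mproc l W X0 beta (p ++ [d]) = Mproc l W X0 beta p + beta d * / wd).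
  { apply Mproc_snoc; auto. intros i Hi. fold p. rewrite Hlast. apply step_pred_crosses; auto. }
  (* only the two neighbours of v can be reached in one step *)
  rewrite (Rsum_ext l _ (fun v' =>
      (if Nat.eqb v' s then wu / (wu + wd) * Mproc l W X0 beta (p ++ [s]) else 0)
    + (if Nat.eqb v' d then wd / (wu + wd) * Mproc l W X0 beta (p ++ [d]) else 0))).
  2:{ intros v' _. unfold trans. cbv zeta. fold p. rewrite Hlast. fold s d wu wd.
      destruct (Nat.eqb_spec v' s); destruct (Nat.eqb_spec v' d);
        try lia; try subst v'; ring. }
  rewrite Rsum_plus, !Rsum_indicator by auto.
  rewrite Ms, Md.
  assert (0 < wu) by apply HW. assert (0 < wd) by apply HW.
  field; lra.
Qed.

Lemma martingale_forces_relation l W X0 beta a q v :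
  (3 <= l)%nat -> (forall k, 0 < W k) -> (v < l)%nat -> last (a :: q) 0%nat = v ->
  Rsum_seq l (fun v' => trans l W X0 (a :: q) v' * Mproc l W X0 beta ((a :: q) ++ [v']))
  = Mproc l W X0 beta (a :: q) ->
  beta v + beta (vpred l v) = 0.
Proof.
  intros H3 HW Hv Hlast Hmart.
  rewrite (expected_increment l W X0 beta a q v H3 HW Hv Hlast) in Hmart.
  set (wsum := W (Xw l X0 (a :: q) v) + W (Xw l X0 (a :: q) (vpred l v))) in Hmart.
  assert (Hw : 0 < wsum) by (unfold wsum; pose proof (HW (Xw l X0 (a :: q) v));
                             pose proof (HW (Xw l X0 (a :: q) (vpred l v))); lra).
  assert (Hzero : (beta v + beta (vpred l v)) / wsum = 0) by lra.
  replace (beta v + beta (vpred l v)) with ((beta v + beta (vpred l v)) / wsum * wsum)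
    by (field; lra).
  rewrite Hzero; ring.
Qed.

Fixpoint clockwise_walk (l v n : nat) : list nat :=
  match n with
  | O => []
  | S n' => vsucc l v :: clockwise_walk l (vsucc l v) n'
  end.

Lemma clockwise_walk_prob_pos l W X0 : (forall k, 0 < W k) -> forall n hist,
  pp_aux l W X0 hist (clockwise_walk l (last hist 0%nat) n) > 0.
Proof.
  intros HW n; induction n as [|n IH]; intros hist; simpl; [lra|].
  apply Rmult_gt_0_compat.
  - unfold trans. cbv zeta. rewrite Nat.eqb_refl.
    pose proof (HW (Xw l X0 hist (last hist 0%nat))).
    pose proof (HW (Xw l X0 hist (vpred l (last hist 0%nat)))).
    apply Rdiv_lt_0_compat; lra.
  - specialize (IH (hist ++ [vsucc l (last hist 0%nat)])).
    rewrite last_last in IH. exact IH.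
Qed.

Lemma clockwise_walk_last l : (l <> 0)%nat -> forall n v, (v < l)%nat ->
  last (v :: clockwise_walk l v n) 0%nat = ((v + n) mod l)%nat.
Proof.
  intros Hl n; induction n as [|n IH]; intros v Hv.
  - simpl. rewrite Nat.add_0_r, Nat.mod_small; auto.
  - change (last (v :: clockwise_walk l v (S n)) 0%nat)
      with (last (vsucc l v :: clockwise_walk l (vsucc l v) n) 0%nat).
    rewrite IH by (unfold vsucc; apply Nat.mod_upper_bound; auto).
    unfold vsucc. rewrite Nat.Div0.add_mod_idemp_l. f_equal. lia.
Qed.

Lemma every_vertex_reachable l W X0 v0 k : (forall k, 0 < W k) ->
  (v0 < l)%nat -> (k < l)%nat ->
  exists q, path_prob l W X0 v0 (v0 :: q) > 0 /\ last (v0 :: q) 0%nat = k.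
Proof.
  intros HW Hv0 Hk. exists (clockwise_walk l v0 (k + l - v0)). split.
  - unfold path_prob. rewrite Nat.eqb_refl. exact (clockwise_walk_prob_pos l W X0 HW _ [v0]).
  - rewrite clockwise_walk_last by lia.
    replace (v0 + (k + l - v0))%nat with (k + 1 * l)%nat by lia.
    rewrite Nat.Div0.mod_add, Nat.mod_small; lia.
Qed.

(* A labelling of an odd cycle whose values at adjacent vertices sum to zero
   alternates in sign, beta_k = (-1)^k beta_0, hence vanishes. *)
Lemma odd_cycle_alternating_zero l (beta : nat -> R) : Nat.Odd l ->
  (forall k, (k < l)%nat -> beta k + beta (vpred l k) = 0) ->
  forall i, (i < l)%nat -> beta i = 0.
Proof.
  intros [m Hl] Hrel.
  assert (Halt : forall k, (k < l)%nat -> beta k = (-1) ^ k * beta 0%nat).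
  { induction k as [|k IH]; intros Hk; [simpl; ring|].
    pose proof (Hrel (S k) Hk) as Hr.
    destruct (vpred_spec l (S k) Hk) as [[E _]|[_ E]]; [|lia].
    rewrite E, Nat.sub_succ, Nat.sub_0_r, IH in Hr by lia. simpl. lra. }
  assert (Hzero : beta 0%nat = 0).
  { pose proof (Hrel 0%nat ltac:(lia)) as Hr.
    destruct (vpred_spec l 0 ltac:(lia)) as [[_ E]|[E _]]; [lia|].
    rewrite E, (Halt (l - 1)%nat) in Hr by lia.
    replace (l - 1)%nat with (2 * m)%nat in Hr by lia.
    rewrite pow_1_even in Hr. lra. }
  intros i Hi. rewrite Halt, Hzero by exact Hi. ring.
Qed.

Theorem mainTheorem6 (l : nat) (W : nat -> R) (X0 : nat -> nat) (v0 : nat) (beta : nat -> R) :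
  (3 <= l)%nat -> Nat.Odd l -> (forall k, 0 < W k) -> (v0 < l)%nat ->
  is_martingale l W X0 v0 beta ->
  forall i, (i < l)%nat -> beta i = 0.
Proof.
  intros H3 Hodd HW Hv0 Hmart.
  apply odd_cycle_alternating_zero; [exact Hodd|].
  intros k Hk.
  destruct (every_vertex_reachable l W X0 v0 k HW Hv0 Hk) as [q [Hpos Hlast]].
  exact (martingale_forces_relation l W X0 beta v0 q k H3 HW Hk Hlast (Hmart _ Hpos)).
Qed.
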